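(* Let $k\ge r\ge 3$ and $t\ge0$ be integers and let $\pi\in\mathbb{C}(k,r)$ be a partition whose largest odd part is $2t+1$. Then: (1) if there is a part $2t+2$ with mark $2$ in $GG(\pi)$, then this part is of starting type $s_0$ or $s_2$; (2) if there is a part $2t+4$ with mark $2$ in $GG(\pi)$, then this part is of starting type $s_3$.
   Context: A partition $\pi=(\pi_1,\dots,\pi_\ell)$ is a finite non-increasing sequence of positive integers; ''$a$ occurs in $\pi$'' means $a=\pi_i$ for some $i$. Göllnitz–Gordon marking: $GG(\pi)$ assigns a positive integer (mark) to each part, processing the parts from smallest to largest; $\pi_i$ receives the smallest positive integer different from the marks of all parts $\pi_g$ with $g>i$ and $\pi_i-\pi_g\le 2$, where $\pi_i-\pi_g<2$ is required when $\pi_i$ is odd. An ''$r$-marked part $a$'' is a part equal to $a$ with mark $r$. $N_i(\pi)$ is the number of parts with mark $i$; $\pi^{(i)}_1\ge\dots\ge\pi^{(i)}_{N_i(\pi)}$ are the parts with mark $i$, with $\pi^{(i)}_0=+\infty$. $\mathbb{C}(k,r)$: partitions with (i) no odd part repeated; (ii) $\pi_i\ge\pi_{i+k-1}+2$ for $1\le i\le\ell-k+1$, strict if $\pi_i$ even; (iii) at most $r-1$ parts $\le 2$. Starting types: for $\pi\in\mathbb{C}(k,r)$ with $N_2=N_2(\pi)\ge1$, let $l$ be the largest integer in $\{0,\dots,N_2\}$ such that no odd part of $\pi$ is $\ge\pi^{(2)}_l$; for $l<i\le N_2$, $\pi^{(2)}_i$ has type $s_{-1}$. For $b=1,\dots,l$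 in increasing order, type and auxiliary $\sigma_b$: for $b=1$: Case 1: 1-marked part $\pi^{(2)}_1-1$ exists and $\pi^{(2)}_1+2$ does not occur: type $s_0$, $\sigma_1=\pi^{(2)}_1-1$; Case 2: 1-marked $\pi^{(2)}_1-2$ exists and $\pi^{(2)}_1+2$ does not occur: type $s_1$, $\sigma_1=\pi^{(2)}_1-2$; Case 3: 1-marked $\pi^{(2)}_1+2$ exists: type $s_2$, $\sigma_1=\pi^{(2)}_1+2$; Case 4: 1-marked $\pi^{(2)}_1$ exists: type $s_3$, $\sigma_1=\pi^{(2)}_1$. For $2\le b\le l$: Case 1: 1-marked $\pi^{(2)}_b-1$ exists and, if a 1-marked $\pi^{(2)}_b+2$ exists, $\sigma_{b-1}=\pi^{(2)}_b+2$: type $s_0$, $\sigma_b=\pi^{(2)}_b-1$; Case 2: same with $\pi^{(2)}_b-2$: type $s_1$, $\sigma_b=\pi^{(2)}_b-2$; Case 3: 1-marked $\pi^{(2)}_b+2$ exists and $\sigma_{b-1}\ne\pi^{(2)}_b+2$: type $s_2$, $\sigma_b=\pi^{(2)}_b+2$; Case 4: 1-marked $\pi^{(2)}_b$ exists: type $s_3$, $\sigma_b=\pi^{(2)}_b$. *)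

From mathcomp Require Import all_boot.
Set Implicit Arguments. Unset Strict Implicit. Unset Printing Implicit Defensive.

(* Partitions are represented as non-increasing sequences of positive naturals;
   index i (1-based in the paper) is position i-1 in the sequence. *)
Definition is_partition (p : seq nat) : bool := sorted geq p && all (fun x => 0 < x) p.

Definition mex1 (L : seq nat) : nat :=
  head 0 [seq n <- iota 1 (size L).+1 | n \notin L].

(* the Goellnitz-Gordon "nearness" condition: pi_i - pi_g <= 2,
   strict (< 2) when pi_i is odd (here pi_g <= pi_i). *)
Definition GG_near (x y : nat) : bool := if odd x then x - y < 2 else x - y <= 2.

(* GG marks, listed in the same order as the parts; the parts are processed
   from the smallest (end of the list) to the largest. *)
Fixpoint GG_marks (s : seq nat) : seq nat :=
  match s with
  | [::] => [::]
  | x :: s' => let ms := GG_marks s' in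
      mex1 [seq q.2 | q <- zip s' ms & GG_near x q.1] :: ms
  end.

Definition marked (p : seq nat) : seq (nat * nat) := zip p (GG_marks p).

Definition Nmark (i : nat) (p : seq nat) : nat := count (fun q => q.2 == i) (marked p).

Definition parts_marked (i : nat) (p : seq nat) : seq nat :=
  [seq q.1 | q <- marked p & q.2 == i].

(* pi^(i)_j for 1 <= j <= N_i (the value for j = 0, i.e. +infinity, is
   treated separately where it is used) *)
Definition pim (i : nat) (p : seq nat) (j : nat) : nat := nth 0 (parts_marked i p) j.-1.

Definition has_marked (p : seq nat) (r a : nat) : bool := (a, r) \in marked p.

Definition inC (k r : nat) (p : seq nat) : bool :=
  [&& is_partition p,
      all (fun a => ~~ odd a || (count_mem a p <= 1)) p,
      all (fun i => if odd (nth 0 p i)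
                    then nth 0 p (i + k - 1) + 2 <= nth 0 p i
                    else nth 0 p (i + k - 1) + 2 < nth 0 p i)
          (iota 0 (size p + 1 - k))
    & count (fun x => x <= 2) p <= r - 1].

(* condition defining l: no odd part of pi is >= pi^(2)_j (j = 0 : +infinity) *)
Definition no_odd_ge (p : seq nat) (j : nat) : bool :=
  (j == 0) || all (fun x => ~~ odd x || (x < pim 2 p j)) p.

Definition lval (p : seq nat) : nat :=
  \max_(j < (Nmark 2 p).+1 | no_odd_ge p j) (j : nat).

Inductive stype := s_m1 | s_0 | s_1 | s_2 | s_3.

(* type and sigma_b of pi^(2)_b for 1 <= b <= l (None if no case applies) *)
Fixpoint st_aux (p : seq nat) (b : nat) : option (stype * nat) :=
  match b with
  | 0 => None
  | b'.+1 =>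
    let a := pim 2 p b in
    let h1 := has_marked p 1 in
    match b' with
    | 0 =>
      if h1 (a - 1) && (a + 2 \notin p) then Some (s_0, a - 1)
      else if h1 (a - 2) && (a + 2 \notin p) then Some (s_1, a - 2)
      else if h1 (a + 2) then Some (s_2, a + 2)
      else if h1 a then Some (s_3, a)
      else None
    | _ =>
      match st_aux p b' with
      | None => None
      | Some (_, sg) =>
        let c := h1 (a + 2) ==> (sg == a + 2) in
        if h1 (a - 1) && c then Some (s_0, a - 1)
        else if h1 (a - 2) && c then Some (s_1, a - 2)
        else if h1 (a + 2) && (sg != a + 2) then Some (s_2, a + 2)
        else if h1 a then Some (s_3, a)
        else None
      end
    end
  end.

Definition start_type (p : seq nat) (j : nat) : option stype :=
  if lval p < j then Some s_m1 else omap fst (st_aux p j).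

From mathcomp Require Import all_boot zify.
Set Implicit Arguments. Unset Strict Implicit. Unset Printing Implicit Defensive.

(* Let o = 2t+1, so every part above o is even.  The part o comes after o+1 in
   the marking order and every neighbour of o is also a neighbour of o+1, so the
   mark of o+1 exceeds that of o: o+1 is never 1-marked, and if it is 2-marked
   then o is 1-marked.  A part a+2 whose only possible smaller neighbours are a
   (not 1-marked) and the odd a+1 (absent) is 1-marked.  Hence for a 2-marked
   o+1 the 1-marked o = (o+1)-1 exists and any part o+3 is 1-marked, which
   leaves only types s_0 and s_2; for a 2-marked o+3 the 1-marked neighbour
   must be o+3 itself, while o+2, o+1 and o+5 are not 1-marked, which leaves
   only s_3.  The same facts show that the case analysis defining the types
   never gets stuck above o, and that all these parts have index at most l. *)

Definition near_marks (x : nat) (s : seq nat) : seq nat :=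
  [seq q.2 | q <- marked s & GG_near x q.1].

Lemma marked_cons x s : marked (x :: s) = (x, mex1 (near_marks x s)) :: marked s.
Proof. by []. Qed.

Lemma head_filter_iotaP (P : pred nat) a k : has P (iota a k) ->
  let n := head 0 [seq m <- iota a k | P m] in
  [/\ P n, a <= n & forall m, a <= m < n -> ~~ P m].
Proof.
elim: k a => [|k IHk] a //=; case: ifP => [Pa _ | nPa /IHk[Pn le_an min_n]] /=.
  by split=> // m; lia.
split=> //; first lia.
move=> m /andP[le_am lt_mn]; have [->|ne_ma] := eqVneq m a; first by rewrite nPa.
by apply: min_n; lia.
Qed.

Lemma mex1P L :
  [/\ 0 < mex1 L, mex1 L \notin L & forall n, 0 < n < mex1 L -> n \in L].
Proof.
have : has (fun n => n \notin L) (iota 1 (size L).+1).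
  apply/negPn/negP => /hasPn free.
  have /uniq_leq_size : {subset iota 1 (size L).+1 <= L}.
    by move=> n /free; rewrite negbK.
  by move/(_ (iota_uniq _ _)); rewrite size_iota ltnn.
move=> /head_filter_iotaP[notin_L pos_n min_n]; split=> // n n_range.
by apply/negPn/min_n.
Qed.

Lemma mex1_gt L c : (forall n, 0 < n <= c -> n \in L) -> c < mex1 L.
Proof.
case: (mex1P L) => pos notin_L _ all_in; rewrite ltnNge; apply: contra notin_L.
by move=> le_mc; apply: all_in; rewrite pos.
Qed.

Lemma near_marksP x s n :
  reflect (exists2 y, (y, n) \in marked s & GG_near x y) (n \in near_marks x s).
Proof.
apply: (iffP mapP) => [[[y m]] | [y y_n near_y]].
  by rewrite mem_filter /= => /andP[near_y y_m] ->; exists y.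
by exists (y, n); rewrite // mem_filter near_y.
Qed.

Lemma unzip1_marked s : unzip1 (marked s) = s.
Proof. by rewrite unzip1_zip //; elim: s => //= x s ->. Qed.

Lemma marked_mem s y m : (y, m) \in marked s -> y \in s.
Proof. by rewrite -{2}(unzip1_marked s) => y_m; apply/mapP; exists (y, m). Qed.

Lemma marked_exists s y : y \in s -> exists m, (y, m) \in marked s.
Proof. by rewrite -{1}(unzip1_marked s) => /mapP[[z m] z_m /= ->]; exists m. Qed.

Lemma marked_split s x m : (x, m) \in marked s ->
  exists s1 s2, s = s1 ++ x :: s2 /\ m = mex1 (near_marks x s2).
Proof.
elim: s => // z s IHs; rewrite marked_cons inE => /orP[/eqP[-> ->] | /IHs].
  by exists [::], s.
by move=> [s1 [s2 [-> ->]]]; exists (z :: s1), s2.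
Qed.

Lemma mark_gt0 s y m : (y, m) \in marked s -> 0 < m.
Proof. by move=> /marked_split[s1 [s2 [_ ->]]]; case: (mex1P (near_marks y s2)). Qed.

Lemma marked_suffix s1 x s2 : {subset marked s2 <= marked (s1 ++ x :: s2)}.
Proof.
move=> q q_s2; elim: s1 => [|z s1 IHs1] /=; rewrite marked_cons inE ?q_s2 ?IHs1;
  exact: orbT.
Qed.

Lemma marked_prefix_free s1 s2 y m :
  (y, m) \in marked (s1 ++ s2) -> y \notin s1 -> (y, m) \in marked s2.
Proof.
elim: s1 => //= z s1 IHs1; rewrite marked_cons !inE.
by case/orP=> [/eqP[-> _] | /IHs1 y_m /norP[_ /y_m]]; rewrite ?eqxx.
Qed.

Section SortedMarks.

Variable p : seq nat.
Hypothesis p_sorted : sorted geq p.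

Lemma sorted_geq_split s1 x s2 : p = s1 ++ x :: s2 ->
  {in s1, forall y, x <= y} /\ {in s2, forall y, y <= x}.
Proof.
move: p_sorted; rewrite sorted_pairwise; last exact: rev_trans leq_trans.
move=> + p_eq; rewrite p_eq pairwise_cat /= => /and3P[/allrelP above _].
move=> /andP[/allP below _]; split=> y y_in; first exact: above (mem_head _ _).
exact: below.
Qed.

Lemma marked_mex_below x m : (x, m) \in marked p ->
  exists2 s, m = mex1 (near_marks x s) &
    [/\ {subset marked s <= marked p}, {in s, forall y, y <= x} &
        forall y n, (y, n) \in marked p -> y < x -> (y, n) \in marked s].
Proof.
case/marked_split=> s1 [s2 [p_eq ->]]; exists s2 => //.
have [above below] := sorted_geq_split p_eq.
split=> //; first by rewrite p_eq; apply: marked_suffix.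
move=> y n; rewrite p_eq => /marked_prefix_free y_n lt_yx.
have : (y, n) \in marked (x :: s2) by apply: y_n; apply/negP => /above; lia.
by rewrite marked_cons inE => /orP[/eqP[eq_yx _] | //]; lia.
Qed.

Lemma mark_neq_near x y mx my : y < x -> GG_near x y ->
  (x, mx) \in marked p -> (y, my) \in marked p -> mx != my.
Proof.
move=> lt_yx near_y /marked_mex_below[s -> [_ _ below]] /below/(_ lt_yx) y_my.
case: (mex1P (near_marks x s)) => _ notin_s _.
by apply: contraNneq notin_s => ->; apply/near_marksP; exists y.
Qed.

Lemma marked_near_below x m n : (x, m) \in marked p -> 0 < n < m ->
  exists2 y, (y, n) \in marked p & y <= x /\ GG_near x y.
Proof.
case/marked_mex_below=> s -> [sub_p le_x _] n_range.
case: (mex1P (near_marks x s)) => _ _ /(_ n n_range) /near_marksP[y y_n near_y].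
by exists y; [apply: sub_p | split=> //; apply/le_x/(marked_mem y_n)].
Qed.

Lemma mark_lt_near x y mx my : y < x -> GG_near x y ->
  (forall z, z <= y -> GG_near y z -> GG_near x z) ->
  (x, mx) \in marked p -> (y, my) \in marked p -> my < mx.
Proof.
move=> lt_yx near_y near_sub /marked_mex_below[s -> [_ _ below]] y_my.
apply: mex1_gt => n /andP[n_gt0]; rewrite leq_eqVlt => /orP[/eqP-> | lt_n].
  by apply/near_marksP; exists y => //; apply: below.
have n_range : 0 < n < my by rewrite n_gt0.
have [z z_n [le_zy near_z]] := marked_near_below y_my n_range.
by apply/near_marksP; exists z; [apply: below => //; lia | apply: near_sub].
Qed.

Lemma mark_lt_odd_succ o mo m : odd o ->
  (o.+1, m) \in marked p -> (o, mo) \in marked p -> mo < m.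
Proof.
move=> o_odd; apply: mark_lt_near; rewrite /GG_near /= ?o_odd //=; first lia.
by move=> z _; lia.
Qed.

Lemma marked1_isolated z : z \in p ->
  (forall y, (y, 1) \in marked p -> y < z -> ~~ GG_near z y) -> (z, 1) \in marked p.
Proof.
case/marked_exists=> m z_m isolated; have [<- // | ne_m1] := eqVneq m 1.
have m_gt1 : 0 < 1 < m by have := mark_gt0 z_m; lia.
have [y y_1 [le_yz near_y]] := marked_near_below z_m m_gt1.
have [lt_yz | <- //] : y < z \/ y = z by lia.
by have := isolated y y_1 lt_yz; rewrite near_y.
Qed.

Lemma has_marked1_near_even a m : ~~ odd a -> (a, m) \in marked p -> 1 < m ->
  [|| has_marked p 1 a, has_marked p 1 (a - 1) | has_marked p 1 (a - 2)].
Proof.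
move=> a_even a_m m_gt1.
have [y y_1 []] := marked_near_below a_m (n := 1) m_gt1.
rewrite /GG_near (negbTE a_even) => le_ya near_y.
have : [|| y == a, y == a - 1 | y == a - 2] by lia.
by rewrite /has_marked; case/or3P=> /eqP <-; rewrite y_1 ?orbT.
Qed.

End SortedMarks.

Lemma pim_marked p j : 1 <= j <= Nmark 2 p -> (pim 2 p j, 2) \in marked p.
Proof.
move=> j_range; have lt_j : j.-1 < size [seq q <- marked p | q.2 == 2].
  by rewrite size_filter; rewrite /Nmark in j_range; lia.
rewrite /pim /parts_marked (nth_map (0, 0)) //.
move: (mem_nth (0, 0) lt_j); rewrite mem_filter => /andP[/eqP].
by case: (nth _ _ _) => a b /= ->.
Qed.

Lemma pim_nonincr p i j : sorted geq p -> i <= j -> 1 <= j <= Nmark 2 p ->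
  pim 2 p j <= pim 2 p i.
Proof.
move=> p_sorted le_ij; rewrite /Nmark => j_range.
have : sorted geq (parts_marked 2 p).
  apply: subseq_sorted p_sorted; first exact: rev_trans leq_trans.
  by rewrite -{2}(unzip1_marked p); apply/map_subseq/filter_subseq.
move/(sorted_leq_nth (rev_trans leq_trans) (@leqnn) 0); apply.
all: rewrite ?inE /parts_marked ?size_map ?size_filter; lia.
Qed.

Lemma lval_ge p j : j <= Nmark 2 p -> no_odd_ge p j -> j <= lval p.
Proof.
move=> le_jN no_odd; have lt_jN : j < (Nmark 2 p).+1 by [].
exact: (leq_bigmax_cond (Ordinal lt_jN) no_odd).
Qed.

(* The four cases defining the type of a part a = pi^(2)_b: c is the side
   condition of Cases 1 and 2 and d that of Case 3; both depend on whether
   b = 1 and on sigma_(b-1). *)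
Definition start_case (h1 : nat -> bool) (a : nat) (c d : bool) : option (stype * nat) :=
  if h1 (a - 1) && c then Some (s_0, a - 1)
  else if h1 (a - 2) && c then Some (s_1, a - 2)
  else if h1 (a + 2) && d then Some (s_2, a + 2)
  else if h1 a then Some (s_3, a)
  else None.

Lemma st_aux_start_case p b : (b == 1) || isSome (st_aux p b.-1) ->
  let h1 := has_marked p 1 in let a := pim 2 p b in
  exists c d, st_aux p b = start_case h1 a c d /\
    ((a + 2 \in p -> h1 (a + 2)) -> c || h1 (a + 2) && d).
Proof.
case: b => [|[|b]] // prev h1 a.
  exists (a + 2 \notin p), true; rewrite /start_case andbT; split=> //.
  by case: (_ \in p) => // /(_ isT) ->.
pose next sg := start_case h1 a (h1 (a + 2) ==> (sg == a + 2)) (sg != a + 2).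
have -> : st_aux p b.+2 = if st_aux p b.+1 is Some (_, sg) then next sg else None.
  by [].
case: (st_aux p b.+1) prev => [[_ sg]|] // _.
exists (h1 (a + 2) ==> (sg == a + 2)), (sg != a + 2); split=> // _.
by case: (h1 (a + 2)); case: (sg == a + 2).
Qed.

Section StartCase.

Variables (h1 : nat -> bool) (a : nat) (c d : bool).

Lemma start_case_some :
  h1 a || (h1 (a - 1) || h1 (a - 2)) && (c || h1 (a + 2) && d) ->
  isSome (start_case h1 a c d).
Proof.
rewrite /start_case.
by case: (h1 a) (h1 (a - 1)) (h1 (a - 2)) (h1 (a + 2)) c d => [] [] [] [] [] [].
Qed.

Lemma start_case_s0_s2 : h1 (a - 1) -> c || h1 (a + 2) && d ->
  omap fst (start_case h1 a c d) = Some s_0 \/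
  omap fst (start_case h1 a c d) = Some s_2.
Proof.
by rewrite /start_case => ->; case: c => [|/= ->]; rewrite ?andbF; [left | right].
Qed.

Lemma start_case_s3 : ~~ h1 (a - 1) -> ~~ h1 (a - 2) -> ~~ h1 (a + 2) -> h1 a ->
  omap fst (start_case h1 a c d) = Some s_3.
Proof. by rewrite /start_case => /negbTE-> /negbTE-> /negbTE-> ->. Qed.

End StartCase.

Section LargestOddPart.

Variables (p : seq nat) (o : nat).
Hypotheses (p_sorted : sorted geq p) (o_odd : odd o) (o_in_p : o \in p).
Hypothesis o_max : forall x, x \in p -> odd x -> x <= o.

Lemma even_above x : x \in p -> o < x -> ~~ odd x.
Proof. by move=> x_in lt_ox; apply/negP => /(o_max x_in); lia. Qed.

Lemma mark_succ_gt1 m : (o.+1, m) \in marked p -> 1 < m.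
Proof.
move=> succ_m; have [mo o_mo] := marked_exists o_in_p.
by have := mark_gt0 o_mo; have := mark_lt_odd_succ p_sorted o_odd succ_m o_mo; lia.
Qed.

Lemma marked1_of_succ2 : (o.+1, 2) \in marked p -> (o, 1) \in marked p.
Proof.
move=> succ_2; have [mo o_mo] := marked_exists o_in_p.
have lt_mo := mark_lt_odd_succ p_sorted o_odd succ_2 o_mo.
by have -> : 1 = mo by have := mark_gt0 o_mo; lia.
Qed.

Lemma marked1_plus2 a : a \in p -> o < a -> ~~ has_marked p 1 a ->
  a + 2 \in p -> has_marked p 1 (a + 2).
Proof.
move=> a_in lt_oa not_a1 a2_in; apply: marked1_isolated => // y y_1 lt_y.
have a_even := even_above a_in lt_oa.
rewrite /GG_near addn2 /= (negbTE a_even) /=; apply/negP => near_y.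
have [y_a | y_a1] : y = a \/ y = a.+1 by lia.
  by move: not_a1; rewrite /has_marked -y_a y_1.
by have := o_max (marked_mem y_1); rewrite y_a1 /= a_even; lia.
Qed.

Lemma marked1_of_plus3_2 : (o.+3, 2) \in marked p -> (o.+3, 1) \in marked p.
Proof.
move=> plus3_2; have [y y_1 [le_y]] := marked_near_below p_sorted plus3_2 (n := 1) isT.
rewrite /GG_near /= o_odd /= => near_y.
have : [|| y == o.+1, y == o.+2 | y == o.+3] by lia.
case/or3P=> /eqP y_eq; rewrite y_eq in y_1.
- by have := mark_succ_gt1 y_1.
- by have := o_max (marked_mem y_1); rewrite /= o_odd; lia.
- exact: y_1.
Qed.

Lemma not_marked1_plus5 : (o.+3, 1) \in marked p -> ~~ has_marked p 1 (o.+3 + 2).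
Proof.
move=> plus3_1; apply/negP => plus5_1.
have near_plus3 : GG_near (o.+3 + 2) o.+3 by rewrite addn2 /GG_near /= o_odd /=; lia.
have lt_plus3 : o.+3 < o.+3 + 2 by rewrite addn2.
by have := mark_neq_near p_sorted lt_plus3 near_plus3 plus5_1 plus3_1.
Qed.

Lemma st_aux_some_above b : 1 <= b <= Nmark 2 p -> o < pim 2 p b ->
  (b == 1) || isSome (st_aux p b.-1) -> isSome (st_aux p b).
Proof.
move=> b_range lt_ob /st_aux_start_case[c [d [-> guard]]]; apply: start_case_some.
have a_2 := pim_marked b_range; have a_in := marked_mem a_2.
have a_even := even_above a_in lt_ob.
case a_1: (has_marked p 1 (pim 2 p b)) => //=.
have := has_marked1_near_even p_sorted a_even a_2 isT; rewrite a_1 /= => -> /=.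
by apply: guard; apply: marked1_plus2; rewrite ?a_1.
Qed.

Lemma st_aux_above b : 1 <= b <= Nmark 2 p -> o < pim 2 p b -> isSome (st_aux p b).
Proof.
elim: b => [|b IHb] // b_range lt_ob; apply: st_aux_some_above => //.
case: b IHb b_range lt_ob => [|b] // IHb b_range lt_ob; apply: IHb; first lia.
by apply: leq_trans lt_ob _; apply: pim_nonincr.
Qed.

Lemma start_type_above j : 1 <= j <= Nmark 2 p -> o < pim 2 p j ->
  let h1 := has_marked p 1 in let a := pim 2 p j in
  exists c d, start_type p j = omap fst (start_case h1 a c d) /\
    ((a + 2 \in p -> h1 (a + 2)) -> c || h1 (a + 2) && d).
Proof.
move=> j_range lt_oj h1 a.
have no_odd : no_odd_ge p j.
  apply/orP; right; apply/allP => x x_in.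
  by case: (boolP (odd x)) => //= /(o_max x_in); lia.
rewrite /start_type ltnNge lval_ge //=; last by case/andP: j_range.
have prev : (j == 1) || isSome (st_aux p j.-1).
  case: j j_range lt_oj {h1 a no_odd} => [|[|j]] // j_range lt_oj.
  apply: st_aux_above; first lia.
  by apply: leq_trans lt_oj _; apply: pim_nonincr.
by have [c [d [-> guard]]] := st_aux_start_case prev; exists c, d.
Qed.

Lemma start_type_succ j : 1 <= j <= Nmark 2 p -> pim 2 p j = o.+1 ->
  start_type p j = Some s_0 \/ start_type p j = Some s_2.
Proof.
move=> j_range a_j; have j_2 := pim_marked j_range; rewrite a_j in j_2.
have lt_oj : o < pim 2 p j by rewrite a_j.
have [c [d [-> guard]]] := start_type_above j_range lt_oj; rewrite a_j in guard *.
apply: start_case_s0_s2; first by rewrite subn1; apply: marked1_of_succ2.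
apply: guard; apply: marked1_plus2 (marked_mem j_2) _ _ => //.
by apply/negP => /mark_succ_gt1.
Qed.

Lemma start_type_plus3 j : 1 <= j <= Nmark 2 p -> pim 2 p j = o.+3 ->
  start_type p j = Some s_3.
Proof.
move=> j_range a_j; have j_2 := pim_marked j_range; rewrite a_j in j_2.
have lt_oj : o < pim 2 p j by rewrite a_j; lia.
have [c [d [-> _]]] := start_type_above j_range lt_oj; rewrite a_j.
have plus3_1 := marked1_of_plus3_2 j_2.
apply: start_case_s3 => //; rewrite ?subn1 ?subn2 /=.
- by apply/negP => /marked_mem/o_max; rewrite /= o_odd; lia.
- by apply/negP => /mark_succ_gt1.
- exact: not_marked1_plus5.
Qed.

End LargestOddPart.

Theorem corollary2p11 (k r t : nat) (p : seq nat) :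
  3 <= r -> r <= k -> inC k r p ->
  (2 * t + 1) \in p -> (forall x, x \in p -> odd x -> x <= 2 * t + 1) ->
  (forall j, 1 <= j <= Nmark 2 p -> pim 2 p j = 2 * t + 2 ->
     start_type p j = Some s_0 \/ start_type p j = Some s_2) /\
  (forall j, 1 <= j <= Nmark 2 p -> pim 2 p j = 2 * t + 4 ->
     start_type p j = Some s_3).
Proof.
move=> _ _ /and4P[/andP[p_sorted _] _ _ _] o_in o_max.
have o_odd : odd (2 * t + 1) by rewrite oddD oddM.
have -> : 2 * t + 2 = (2 * t + 1).+1 by lia.
have -> : 2 * t + 4 = (2 * t + 1).+3 by lia.
split=> j; [exact: start_type_succ | exact: start_type_plus3].
Qed.
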